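(* Consider a finite tabular MDP with a unique optimal policy $\pi^*$, in which all states are reachable: $d_\rho^\pi(s)\ge d_{\min}>0$ for all $s\in\mathcal S$ and all policies $\pi$ with full action support. Under the discrete EG update $\pi_{t+1}(a|s)=\pi_t(a|s)\,e^{\eta[U^t_a(s)]_+}/Z^t_s$ with a sufficiently small constant step size $\eta>0$ (started from a softmax policy), (1) $V(\pi_t)\to V^*=V(\pi^* )$, and (2) $\pi_t\to\pi^*$.
   Context: A finite MDP $(\mathcal S,\mathcal A,P,r,\gamma,\rho)$ has finite state and action spaces, transition kernel $P(s'|s,a)$, reward $r(s,a)\in[0,1]$, discount $\gamma\in[0,1)$, initial distribution $\rho$. Tabular softmax policies are $\pi_\theta(a|s)=e^{\theta(s,a)}/\sum_{a'}e^{\theta(s,a')}$. $V^\pi(s)$ and $Q^\pi(s,a)$ are the expected discounted returns from $s$ (resp. from $s$ taking $a$ first), $V(\pi)=\mathbb{E}_{s\sim\rho}V^\pi(s)$, $V^*$ the optimal value, and $d_\rho^\pi(s)=(1-\gamma)\sum_{t\ge0}\gamma^t\Pr(s_t=s\mid\rho,\pi)$. At iteration $t$, $U^t_a(s):=Q^{\pi_t}(s,a)-V^{\pi_t}(s)$, $[x]_+=\max(x,0)$, and $Z^t_s:=\sum_{a'}\pi_t(a'|s)e^{\eta[U^t_{a'}(s)]_+}$. *)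

From HB Require Import structures.
From mathcomp Require Import all_boot all_order all_algebra.
From mathcomp Require Import all_classical all_reals all_analysis.
Set Implicit Arguments. Unset Strict Implicit. Unset Printing Implicit Defensive.
Import Order.TTheory GRing.Theory Num.Theory.
Local Open Scope ring_scope.

Section MDP.
Variables (R : realType) (S A : finType).
(* transition kernel P s a s' = P(s'|s,a); reward r s a *)
Variables (P : S -> A -> S -> R) (r : S -> A -> R) (gamma : R).

Definition is_mdp : Prop :=
  (forall s a s', 0 <= P s a s') /\ (forall s a, \sum_(s' : S) P s a s' = 1) /\
  (forall s a, 0 <= r s a <= 1) /\ 0 <= gamma < 1.

Definition is_dist (rho : S -> R) : Prop :=
  (forall s, 0 <= rho s) /\ \sum_(s : S) rho s = 1.

(* stationary (stochastic) Markov policy: pi s a = pi(a|s) *)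
Definition is_policy (pi : S -> A -> R) : Prop :=
  (forall s a, 0 <= pi s a) /\ (forall s, \sum_(a : A) pi s a = 1).

Definition full_support (pi : S -> A -> R) : Prop := forall s a, 0 < pi s a.

Definition softmax (theta : S -> A -> R) : S -> A -> R :=
  fun s a => expR (theta s a) / \sum_(a' : A) expR (theta s a').

(* state_prob pi s0 t s = Pr(s_t = s | s_0 = s0, pi) *)
Fixpoint state_prob (pi : S -> A -> R) (s0 : S) (t : nat) : S -> R :=
  match t with
  | 0%N => fun s => if s == s0 then 1 else 0
  | t'.+1 => fun s => \sum_(x : S) state_prob pi s0 t' x *
                        \sum_(a : A) pi x a * P x a s
  end.

Definition exp_reward (pi : S -> A -> R) (s0 : S) (t : nat) : R :=
  \sum_(s : S) state_prob pi s0 t s * \sum_(a : A) pi s a * r s a.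

Definition Vs (pi : S -> A -> R) (s : S) : R :=
  limn (fun n => \sum_(t < n) gamma ^+ t * exp_reward pi s t).

Definition Qsa (pi : S -> A -> R) (s : S) (a : A) : R :=
  r s a + gamma * \sum_(s' : S) P s a s' * Vs pi s'.

Definition Vrho (rho : S -> R) (pi : S -> A -> R) : R :=
  \sum_(s : S) rho s * Vs pi s.

Definition visitation (rho : S -> R) (pi : S -> A -> R) (s : S) : R :=
  (1 - gamma) * limn (fun n => \sum_(t < n) gamma ^+ t *
                        \sum_(s0 : S) rho s0 * state_prob pi s0 t s).

Definition optimal_policy (pi : S -> A -> R) : Prop :=
  is_policy pi /\ forall pi', is_policy pi' -> forall s, Vs pi' s <= Vs pi s.

Definition adv (pi : S -> A -> R) (s : S) (a : A) : R := Qsa pi s a - Vs pi s.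

Definition posp (x : R) : R := Num.max x 0.

Definition Zn (eta : R) (pi : S -> A -> R) (s : S) : R :=
  \sum_(a' : A) pi s a' * expR (eta * posp (adv pi s a')).

Definition eg_step (eta : R) (pi : S -> A -> R) : S -> A -> R :=
  fun s a => pi s a * expR (eta * posp (adv pi s a)) / Zn eta pi s.

Fixpoint eg_iter (eta : R) (theta : S -> A -> R) (t : nat) : S -> A -> R :=
  match t with
  | 0%N => softmax theta
  | t'.+1 => eg_step eta (eg_iter eta theta t')
  end.

End MDP.

(* Write h_t(s) = sum_a pi_t(a|s) [U^t_a(s)]_+^2.  Since e^{eta x} - 1 >= eta x
   and the advantages average to zero under pi_t, the EG policy pi_{t+1} has
   average advantage at least eta e^{-eta/(1-gamma)} h_t(s) against pi_t.  By the
   performance-difference inequality (a minimum principle for the Bellman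
   operator) V^{pi_t} is then nondecreasing and bounded, so it converges to some
   V_lim, h_t -> 0, and the advantages converge to the advantages U_lim of V_lim.
   No U_lim(s,a) is positive: otherwise every action b would lose its mass, through
   h_t -> 0 if U_lim(s,b) > 0, and geometrically relative to a if U_lim(s,b) <= 0.
   Hence V_lim dominates its one-step lookahead under pi*, and the minimum
   principle gives V_lim = V*.  Finally, actions of negative limit advantage lose
   their mass under pi_t and carry none under pi*, while an action of zero limit
   advantage can be played deterministically by an optimal policy, so by
   uniqueness pi* is deterministic there. *)

From HB Require Import structures.
From mathcomp Require Import all_boot all_order all_algebra.
From mathcomp Require Import all_classical all_reals all_analysis.
From mathcomp Require Import ring lra.
Import Order.TTheory GRing.Theory Num.Theory.
Import numFieldNormedType.Exports.
Local Open Scope classical_set_scope.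
Local Open Scope ring_scope.

Section RealFacts.
Context {R : realType}.

Lemma cvg_sum [I : Type] (s : seq I) (P : pred I) [f : I -> nat -> R] [l : I -> R] :
  (forall i, P i -> f i n @[n --> \oo] --> l i) ->
  \sum_(i <- s | P i) f i n @[n --> \oo] --> \sum_(i <- s | P i) l i.
Proof. by move=> fl; apply: cvg_big => //; exact: add_continuous. Qed.

Lemma le_sum_term [I : finType] [F : I -> R] j :
  (forall i, 0 <= F i) -> F j <= \sum_i F i.
Proof. by move=> F0; rewrite (bigD1 j) //= lerDl sumr_ge0. Qed.

Section ConvexCombination.
Context {I : finType} {w : I -> R}.
Hypotheses (w_ge0 : forall i, 0 <= w i) (w_sum1 : \sum_i w i = 1).

Lemma convex_le {F : I -> R} {c : R} : (forall i, F i <= c) -> \sum_i w i * F i <= c.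
Proof.
move=> Fc; rewrite -[leRHS]mul1r -w_sum1 mulr_suml.
by apply: ler_sum => i _; rewrite ler_wpM2l.
Qed.

Lemma convex_ge {F : I -> R} {c : R} : (forall i, c <= F i) -> c <= \sum_i w i * F i.
Proof.
move=> Fc; rewrite -[leLHS]mul1r -w_sum1 mulr_suml.
by apply: ler_sum => i _; rewrite ler_wpM2l.
Qed.

End ConvexCombination.

Lemma sum1_card_gt0 [I : finType] [w : I -> R] : \sum_i w i = 1 -> (0 < #|I|)%N.
Proof.
move=> w1; case: (pickP (@predT I)) => [i _|I0]; first by apply/card_gt0P; exists i.
by move: w1; rewrite big_pred0 // => /eqP; rewrite eq_sym oner_eq0.
Qed.

Lemma invr1B_unfold (g : R) : g != 1 -> (1 - g)^-1 = 1 + g * (1 - g)^-1.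
Proof. by move=> g1; field; rewrite subr_eq0 eq_sym. Qed.

Lemma discounted_sum_le (g : R) (e : nat -> R) n : 0 <= g < 1 ->
  (forall t, 0 <= e t <= 1) -> \sum_(t < n) g ^+ t * e t <= (1 - g)^-1.
Proof.
move=> /andP[g0 g1]; elim: n e => [|n IH] e e01.
  by rewrite big_ord0 invr_ge0 subr_ge0 ltW.
rewrite big_ord_recl expr0 mul1r invr1B_unfold ?lt_eqF //.
under eq_bigr do rewrite exprS -mulrA.
rewrite -mulr_sumr lerD ?ler_wpM2l //; first by case/andP: (e01 0%N).
exact: (IH (fun t => e t.+1)).
Qed.

Lemma squeeze_cvg0 [u v : nat -> R] : (\forall t \near \oo, 0 <= u t <= v t) ->
  v t @[t --> \oo] --> 0 -> u t @[t --> \oo] --> 0.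
Proof. by move=> uv v0; apply: (squeeze_cvgr uv) => //; exact: cvg_cst. Qed.

Lemma contracting_cvg0 (u : nat -> R) (q : R) : 0 <= q < 1 ->
  (forall t, 0 <= u t) -> (\forall t \near \oo, u t.+1 <= q * u t) ->
  u t @[t --> \oo] --> 0.
Proof.
move=> /andP[q0 q1] u0 [N _ uN].
have uNk k : u (k + N)%N <= q ^+ k * u N.
  elim: k => [|k IH]; first by rewrite add0n expr0 mul1r.
  rewrite addSn exprS -mulrA; apply: le_trans (uN (k + N)%N _) _.
    by rewrite /= leq_addl.
  exact: ler_wpM2l.
rewrite -(cvg_shiftn N); apply: (@squeeze_cvg0 _ (fun k => q ^+ k * u N)).
  by apply: nearW => k; rewrite u0 uNk.
rewrite -(mul0r (u N)); apply: cvgMr_tmp; apply: cvg_expr.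
by rewrite ger0_norm.
Qed.

Lemma posp_ge0 (x : R) : 0 <= posp x.
Proof. by rewrite /posp le_max lexx orbT. Qed.

Lemma ler_posp (x : R) : x <= posp x.
Proof. by rewrite /posp le_max lexx. Qed.

Lemma ger0_posp (x : R) : 0 <= x -> posp x = x.
Proof. by move=> x0; rewrite /posp max_l. Qed.

Lemma ler0_posp (x : R) : x <= 0 -> posp x = 0.
Proof. by move=> x0; rewrite /posp max_r. Qed.

Lemma posp_sqr_le_expR (eta x : R) :
  eta * posp x ^+ 2 <= (expR (eta * posp x) - 1) * x.
Proof.
have [x0|x0] := lerP x 0.
  by rewrite ler0_posp // expr2 !mulr0 expR0 subrr mul0r.
rewrite ger0_posp ?(ltW x0) // expr2 mulrA ler_pM2r // lerBrDl.
exact: expR_ge1Dx.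
Qed.

End RealFacts.

Section MDPTheory.
Variables (R : realType) (S A : finType).
Variables (P : S -> A -> S -> R) (r : S -> A -> R) (gamma : R).
Hypothesis mdpP : is_mdp P r gamma.

Local Notation V := (Vs P r gamma).
Local Notation U := (adv P r gamma).

Definition pol_kernel (pi : S -> A -> R) s s' := \sum_a pi s a * P s a s'.
Definition pol_reward (pi : S -> A -> R) s := \sum_a pi s a * r s a.

Definition qval (W : S -> R) s a := r s a + gamma * \sum_y P s a y * W y.
Definition bellman (pi : S -> A -> R) (W : S -> R) s :=
  pol_reward pi s + gamma * \sum_y pol_kernel pi s y * W y.

Lemma P_ge0 s a s' : 0 <= P s a s'. Proof. by case: mdpP. Qed.
Lemma P_sum1 s a : \sum_s' P s a s' = 1. Proof. by case: mdpP => _ []. Qed.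
Lemma r_ge0 s a : 0 <= r s a. Proof. by case: mdpP => _ [_ [/(_ s a)/andP[]]]. Qed.
Lemma r_le1 s a : r s a <= 1. Proof. by case: mdpP => _ [_ [/(_ s a)/andP[]]]. Qed.
Lemma gamma_ge0 : 0 <= gamma. Proof. by case: mdpP => _ [_ [_ /andP[]]]. Qed.
Lemma gamma_lt1 : gamma < 1. Proof. by case: mdpP => _ [_ [_ /andP[]]]. Qed.

Lemma QsaE pi : Qsa P r gamma pi = qval (V pi). Proof. by []. Qed.

Lemma avg_qval pi W s : \sum_a pi s a * qval W s a = bellman pi W s.
Proof.
rewrite /qval /bellman /pol_reward /pol_kernel.
under eq_bigr do rewrite mulrDr.
rewrite big_split /=; congr (_ + _).
rewrite [RHS]mulr_sumr; under [RHS]eq_bigr do rewrite mulr_suml mulr_sumr.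
rewrite [RHS]exchange_big /=; apply: eq_bigr => a _.
rewrite !mulr_sumr; apply: eq_bigr => y _.
by ring.
Qed.

Lemma bellmanB pi W1 W2 s : bellman pi W1 s - bellman pi W2 s =
  gamma * \sum_y pol_kernel pi s y * (W1 y - W2 y).
Proof.
rewrite /bellman opprD addrACA subrr add0r -mulrBr -sumrB.
by congr (_ * _); apply: eq_bigr => y _; rewrite mulrBr.
Qed.

Lemma state_prob_recr pi s0 t s : state_prob P pi s0 t.+1 s =
  \sum_x state_prob P pi s0 t x * pol_kernel pi x s.
Proof. by []. Qed.

Lemma state_prob_recl pi s0 t s : state_prob P pi s0 t.+1 s =
  \sum_y pol_kernel pi s0 y * state_prob P pi y t s.
Proof.
elim: t s => [|t IH] s.
  rewrite /= (bigD1 s0) //= eqxx mul1r [X in _ + X]big1 ?addr0; last first.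
    by move=> x /negbTE ->; rewrite mul0r.
  rewrite (bigD1 s) //= eqxx mulr1 [X in _ + X]big1 ?addr0 // => x.
  by rewrite eq_sym => /negbTE ->; rewrite mulr0.
rewrite state_prob_recr; under eq_bigr do rewrite IH mulr_suml.
rewrite exchange_big; apply: eq_bigr => y _.
by rewrite state_prob_recr mulr_sumr; apply: eq_bigr => x _; rewrite mulrA.
Qed.

Definition partial_return pi s n := \sum_(t < n) gamma ^+ t * exp_reward P r pi s t.

Section Policy.
(* The spaces matter: [{pi] is a token of the generic quotient notations. *)
Context { pi : S -> A -> R }.
Hypothesis piP : is_policy pi.

Lemma pi_ge0 s a : 0 <= pi s a. Proof. by case: piP. Qed.
Lemma pi_sum1 s : \sum_a pi s a = 1. Proof. by case: piP. Qed.

Lemma pi_le1 s a : pi s a <= 1.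
Proof. by rewrite -(pi_sum1 s); exact: le_sum_term (pi_ge0 s). Qed.

Lemma pol_kernel_ge0 x y : 0 <= pol_kernel pi x y.
Proof. by apply: sumr_ge0 => a _; rewrite mulr_ge0 ?pi_ge0 ?P_ge0. Qed.

Lemma pol_kernel_sum1 x : \sum_y pol_kernel pi x y = 1.
Proof.
rewrite exchange_big /= -(pi_sum1 x); apply: eq_bigr => a _.
by rewrite -mulr_sumr P_sum1 mulr1.
Qed.

Lemma pol_reward_ge0 x : 0 <= pol_reward pi x.
Proof. exact: (convex_ge (pi_ge0 x) (pi_sum1 x) (r_ge0 x)). Qed.

Lemma pol_reward_le1 x : pol_reward pi x <= 1.
Proof. exact: (convex_le (pi_ge0 x) (pi_sum1 x) (r_le1 x)). Qed.

Lemma state_prob_ge0 s0 t s : 0 <= state_prob P pi s0 t s.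
Proof.
elim: t s => [|t IH] s /=; first by case: eqP.
by apply: sumr_ge0 => x _; rewrite mulr_ge0 // pol_kernel_ge0.
Qed.

Lemma state_prob_sum1 s0 t : \sum_s state_prob P pi s0 t s = 1.
Proof.
elim: t => [|t IH] /=.
  by rewrite (bigD1 s0) //= eqxx big1 ?addr0 // => x /negbTE ->.
rewrite exchange_big /= -IH; apply: eq_bigr => x _.
by rewrite -mulr_sumr pol_kernel_sum1 mulr1.
Qed.

Lemma exp_reward_ge0 s0 t : 0 <= exp_reward P r pi s0 t.
Proof.
exact: (convex_ge (state_prob_ge0 s0 t) (state_prob_sum1 s0 t) pol_reward_ge0).
Qed.

Lemma exp_reward_le1 s0 t : exp_reward P r pi s0 t <= 1.
Proof.
exact: (convex_le (state_prob_ge0 s0 t) (state_prob_sum1 s0 t) pol_reward_le1).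
Qed.

Lemma exp_reward_recl s t :
  exp_reward P r pi s t.+1 = \sum_y pol_kernel pi s y * exp_reward P r pi y t.
Proof.
rewrite /exp_reward; under eq_bigr do rewrite state_prob_recl mulr_suml.
rewrite exchange_big /=; apply: eq_bigr => y _.
by rewrite mulr_sumr; apply: eq_bigr => x _; rewrite mulrA.
Qed.

Lemma partial_returnS s n :
  partial_return pi s n.+1 = bellman pi (partial_return pi ^~ n) s.
Proof.
rewrite /partial_return /bellman big_ord_recl expr0 mul1r; congr (_ + _).
  rewrite /exp_reward /= (bigD1 s) //= eqxx mul1r [X in _ + X]big1 ?addr0 //.
  by move=> x /negbTE ->; rewrite mul0r.
rewrite [RHS]mulr_sumr; under [RHS]eq_bigr do rewrite mulr_sumr mulr_sumr.
rewrite [RHS]exchange_big /=; apply: eq_bigr => t _.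
rewrite /bump /= add1n exp_reward_recl exprS !mulr_sumr; apply: eq_bigr => y _.
by ring.
Qed.

Lemma partial_return_cvg s : partial_return pi s n @[n --> \oo] --> V pi s.
Proof.
suff: cvgn (partial_return pi s) by [].
apply: nondecreasing_is_cvgn.
  apply/nondecreasing_seqP => n; rewrite /partial_return big_ord_recr /= lerDl.
  by rewrite mulr_ge0 ?exprn_ge0 ?gamma_ge0 ?exp_reward_ge0.
exists (1 - gamma)^-1 => _ [n _ <-]; apply: discounted_sum_le.
  by rewrite gamma_ge0 gamma_lt1.
by move=> t; rewrite exp_reward_ge0 exp_reward_le1.
Qed.

Lemma bellman_V s : V pi s = bellman pi (V pi) s.
Proof.
have cvgT : bellman pi (partial_return pi ^~ n) s @[n --> \oo] --> bellman pi (V pi) s.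
  apply: cvgD; first exact: cvg_cst.
  apply: cvgMl_tmp; apply: cvg_sum => y _; apply: cvgMl_tmp.
  exact: partial_return_cvg.
have := partial_return_cvg s; rewrite -cvg_shiftS.
under eq_fun do rewrite /= partial_returnS.
by move=> cvgV; exact: (cvg_unique _ cvgV cvgT).
Qed.

Lemma V_avg_Q s : V pi s = \sum_a pi s a * Qsa P r gamma pi s a.
Proof. by rewrite QsaE avg_qval -bellman_V. Qed.

Lemma avg_adv0 s : \sum_a pi s a * U pi s a = 0.
Proof.
under eq_bigr do rewrite /adv mulrBr.
by rewrite sumrB -mulr_suml pi_sum1 mul1r -V_avg_Q subrr.
Qed.

Lemma superharmonic_ge0 (d : S -> R) :
  (forall s, gamma * \sum_y pol_kernel pi s y * d y <= d s) -> forall s, 0 <= d s.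
Proof.
move=> dK s; case: (@arg_minP _ _ _ s xpredT d isT) => j _ dj.
apply: le_trans (dj s isT).
have dj_avg : d j <= \sum_y pol_kernel pi j y * d y.
  exact: (convex_ge (pol_kernel_ge0 j) (pol_kernel_sum1 j) (fun y => dj y isT)).
have := dK j; have := gamma_ge0; have := gamma_lt1; nra.
Qed.

Lemma subsolution_le_V (W : S -> R) :
  (forall s, W s <= bellman pi W s) -> forall s, W s <= V pi s.
Proof.
move=> WT s; rewrite -subr_ge0; move: s; apply: superharmonic_ge0 => s.
by rewrite -bellmanB -bellman_V; have := WT s; lra.
Qed.

Lemma V_le_supersolution (W : S -> R) :
  (forall s, bellman pi W s <= W s) -> forall s, V pi s <= W s.
Proof.
move=> WT s; rewrite -subr_ge0; move: s; apply: superharmonic_ge0 => s.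
by rewrite -bellmanB -bellman_V; have := WT s; lra.
Qed.

Lemma V_ge0 s : 0 <= V pi s.
Proof.
apply: (subsolution_le_V (fun=> 0)) => x.
by rewrite /bellman big1 ?mulr0 ?addr0 ?pol_reward_ge0 // => y _; rewrite mulr0.
Qed.

Lemma V_le s : V pi s <= (1 - gamma)^-1.
Proof.
apply: (V_le_supersolution (fun=> (1 - gamma)^-1)) => x.
rewrite /bellman -mulr_suml pol_kernel_sum1 mul1r.
rewrite [leRHS]invr1B_unfold ?lt_eqF ?gamma_lt1 //.
by rewrite lerD2r pol_reward_le1.
Qed.

End Policy.

Lemma avg_advE pi pi' : is_policy pi' ->
  forall s, \sum_a pi' s a * U pi s a = bellman pi' (V pi) s - V pi s.
Proof.
move=> pi'P s; under eq_bigr do rewrite /adv mulrBr.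
by rewrite sumrB -mulr_suml pi_sum1 // mul1r QsaE avg_qval.
Qed.

Lemma avg_adv_le_Vdiff [pi pi' : S -> A -> R] : is_policy pi -> is_policy pi' ->
  (forall s, 0 <= \sum_a pi' s a * U pi s a) ->
  forall s, \sum_a pi' s a * U pi s a <= V pi' s - V pi s.
Proof.
move=> piP pi'P avg_ge0.
have V_le_V' : forall s, V pi s <= V pi' s.
  by apply: subsolution_le_V => // s; rewrite -subr_ge0 -avg_advE.
move=> s; rewrite avg_advE // lerD2r (bellman_V pi'P s) -subr_ge0 bellmanB.
rewrite mulr_ge0 ?gamma_ge0 // sumr_ge0 // => y _.
by rewrite mulr_ge0 ?pol_kernel_ge0 // subr_ge0.
Qed.

Lemma adv_le [pi : S -> A -> R] :
  is_policy pi -> forall s a, U pi s a <= (1 - gamma)^-1.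
Proof.
move=> piP s a; rewrite /adv QsaE /qval [leRHS]invr1B_unfold ?lt_eqF ?gamma_lt1 //.
have PV_le : \sum_y P s a y * V pi y <= (1 - gamma)^-1.
  exact: (convex_le (P_ge0 s a) (P_sum1 s a) (V_le piP)).
have := ler_wpM2l gamma_ge0 PV_le; have := r_le1 s a; have := V_ge0 piP s.
lra.
Qed.

Lemma policy_eq0_of_adv_lt0 [pi : S -> A -> R] s a : is_policy pi ->
  (forall b, U pi s b <= 0) -> U pi s a < 0 -> pi s a = 0.
Proof.
move=> piP U_le0 Ua_lt0; apply/eqP; rewrite eq_le pi_ge0 // andbT.
have term_ge0 b : 0 <= pi s b * - U pi s b by rewrite mulr_ge0 ?pi_ge0 ?oppr_ge0.
have sum_eq0 : \sum_b pi s b * - U pi s b = 0.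
  by under eq_bigr do rewrite mulrN; rewrite sumrN (avg_adv0 piP) oppr0.
by have := le_sum_term a term_ge0; rewrite sum_eq0 pmulr_lle0 // oppr_gt0.
Qed.

Definition switch (pi : S -> A -> R) s a : S -> A -> R :=
  fun x b => if x == s then (b == a)%:R else pi x b.

Lemma switch_policy [pi : S -> A -> R] s a : is_policy pi -> is_policy (switch pi s a).
Proof.
move=> piP; split=> x; rewrite /switch; case: (x == s).
- by move=> b; rewrite ler0n.
- exact: pi_ge0.
- by rewrite (bigD1 a) //= eqxx big1 ?addr0 // => b /negbTE ->.
- exact: pi_sum1.
Qed.

(* Playing an action of zero advantage deterministically at a single state keeps
   every advantage average at zero, hence does not lower the value. *)
Lemma switch_optimal [pi : S -> A -> R] s a : optimal_policy P r gamma pi ->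
  U pi s a = 0 -> optimal_policy P r gamma (switch pi s a).
Proof.
move=> [piP pi_opt] Ua_eq0; have switchP := switch_policy s a piP.
have avg_eq0 x : \sum_b switch pi s a x b * U pi x b = 0.
  rewrite /switch; case: (x =P s) => [->|_]; last exact: avg_adv0.
  rewrite (bigD1 a) //= eqxx mul1r Ua_eq0 big1 ?addr0 // => b /negbTE ->.
  by rewrite mul0r.
have V_le x : V pi x <= V (switch pi s a) x.
  by rewrite -subr_ge0 -(avg_eq0 x) avg_adv_le_Vdiff // => y; rewrite avg_eq0.
by split=> // pi' pi'P x; apply: le_trans (V_le x); exact: pi_opt.
Qed.

Lemma softmax_policy (a0 : A) (theta : S -> A -> R) :
  is_policy (softmax theta) /\ full_support (softmax theta).
Proof.
have sum_gt0 s : 0 < \sum_a expR (theta s a).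
  by rewrite (bigD1 a0) //= ltr_pwDl ?expR_gt0 ?sumr_ge0 // => a _; rewrite expR_ge0.
have pos s a : 0 < softmax theta s a by rewrite divr_gt0 ?expR_gt0.
split=> //; split=> [s a|s]; first exact: ltW.
by rewrite -mulr_suml divff // gt_eqF.
Qed.

Section ExponentiatedGradient.
Variables (eta : R) (theta : S -> A -> R) (a0 : A).
Hypothesis eta_gt0 : 0 < eta.

Local Notation pit t := (eg_iter P r gamma eta theta t).
Local Notation Z := (Zn P r gamma eta).

Lemma Zn_ge1 [pi : S -> A -> R] : is_policy pi -> forall s, 1 <= Z pi s.
Proof.
move=> piP s; apply: (convex_ge (pi_ge0 piP s) (pi_sum1 piP s)) => a /=.
by rewrite -expR0 ler_expR mulr_ge0 ?posp_ge0 ?(ltW eta_gt0).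
Qed.

Lemma Zn_le [pi : S -> A -> R] :
  is_policy pi -> forall s, Z pi s <= expR (eta * (1 - gamma)^-1).
Proof.
move=> piP s; apply: (convex_le (pi_ge0 piP s) (pi_sum1 piP s)) => a /=.
rewrite ler_expR ler_wpM2l ?(ltW eta_gt0) // /posp ge_max adv_le //=.
by rewrite invr_ge0 subr_ge0 (ltW gamma_lt1).
Qed.

Lemma eg_step_policy [pi : S -> A -> R] : is_policy pi -> full_support pi ->
  is_policy (eg_step P r gamma eta pi) /\ full_support (eg_step P r gamma eta pi).
Proof.
move=> piP pi_gt0; have Z_gt0 s : 0 < Z pi s := lt_le_trans ltr01 (Zn_ge1 piP s).
have pos s a : 0 < eg_step P r gamma eta pi s a by rewrite divr_gt0 ?mulr_gt0 ?expR_gt0.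
split=> //; split=> [s a|s]; first exact: ltW.
by rewrite /eg_step -mulr_suml -/(Z pi s) divff // gt_eqF.
Qed.

Lemma pit_policy_full t : is_policy (pit t) /\ full_support (pit t).
Proof.
elim: t => [|t [piP pi_gt0]]; first exact: softmax_policy.
exact: eg_step_policy.
Qed.

Lemma pit_policy t : is_policy (pit t). Proof. by case: (pit_policy_full t). Qed.
Lemma pit_gt0 t s a : 0 < pit t s a. Proof. by case: (pit_policy_full t). Qed.

Definition pos_adv_sq pi s := \sum_a pi s a * posp (U pi s a) ^+ 2.

Lemma pos_adv_sq_ge0 [pi : S -> A -> R] :
  is_policy pi -> forall s, 0 <= pos_adv_sq pi s.
Proof. by move=> piP s; apply: sumr_ge0 => a _; rewrite mulr_ge0 ?pi_ge0 ?sqr_ge0. Qed.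

Definition eg_gain := eta / expR (eta * (1 - gamma)^-1).

Lemma eg_gain_gt0 : 0 < eg_gain.
Proof. by rewrite divr_gt0 ?expR_gt0. Qed.

Lemma eg_step_avg_adv [pi : S -> A -> R] : is_policy pi -> forall s,
  eg_gain * pos_adv_sq pi s <= \sum_a eg_step P r gamma eta pi s a * U pi s a.
Proof.
move=> piP s; pose w a := expR (eta * posp (U pi s a)).
have Z_gt0 : 0 < Z pi s := lt_le_trans ltr01 (Zn_ge1 piP s).
(* Since the advantages average to zero under [pi], the normalised reweighting
   only sees the excess weights [w - 1]. *)
have -> : \sum_a eg_step P r gamma eta pi s a * U pi s a =
    (Z pi s)^-1 * \sum_a pi s a * ((w a - 1) * U pi s a).
  have -> : \sum_a pi s a * ((w a - 1) * U pi s a) = \sum_a pi s a * w a * U pi s a.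
    under eq_bigr do rewrite mulrBl mul1r mulrBr.
    by rewrite sumrB (avg_adv0 piP) subr0; apply: eq_bigr => a _; rewrite mulrA.
  rewrite mulr_sumr; apply: eq_bigr => a _.
  by rewrite /eg_step /w; field; rewrite gt_eqF.
have h_le : eta * pos_adv_sq pi s <= \sum_a pi s a * ((w a - 1) * U pi s a).
  rewrite mulr_sumr; apply: ler_sum => a _.
  by rewrite mulrCA ler_wpM2l ?pi_ge0 ?posp_sqr_le_expR.
apply: le_trans (ler_wpM2l _ h_le); last by rewrite invr_ge0 ltW.
rewrite mulrA; apply: ler_wpM2r; first exact: pos_adv_sq_ge0.
rewrite /eg_gain mulrC; apply: ler_wpM2r; first exact: ltW.
by rewrite lef_pV2 ?posrE ?expR_gt0 ?Zn_le.
Qed.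

Lemma V_pit_increment t s :
  eg_gain * pos_adv_sq (pit t) s <= V (pit t.+1) s - V (pit t) s.
Proof.
have gain_le x := eg_step_avg_adv (pit_policy t) x.
apply: le_trans (gain_le s) (avg_adv_le_Vdiff (pit_policy t) (pit_policy t.+1) _ s).
move=> x; apply: le_trans (gain_le x).
by rewrite mulr_ge0 ?(pos_adv_sq_ge0 (pit_policy t)) ?(ltW eg_gain_gt0).
Qed.

Lemma V_pit_nondecreasing s : nondecreasing_seq (fun t => V (pit t) s).
Proof.
apply/nondecreasing_seqP => t; rewrite -subr_ge0; apply: le_trans (V_pit_increment t s).
by rewrite mulr_ge0 ?(pos_adv_sq_ge0 (pit_policy t)) ?(ltW eg_gain_gt0).
Qed.

Definition V_lim s := limn (fun t => V (pit t) s).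
Definition U_lim s a := qval V_lim s a - V_lim s.

Lemma V_pit_cvg s : V (pit t) s @[t --> \oo] --> V_lim s.
Proof.
suff: cvgn (fun t => V (pit t) s) by [].
apply: nondecreasing_is_cvgn; first exact: V_pit_nondecreasing.
by exists (1 - gamma)^-1 => _ [t _ <-]; exact: V_le (pit_policy t) s.
Qed.

Lemma pos_adv_sq_pit_cvg0 s : pos_adv_sq (pit t) s @[t --> \oo] --> 0.
Proof.
apply: (@squeeze_cvg0 _ _ (fun t => eg_gain^-1 * (V (pit t.+1) s - V (pit t) s))).
  apply: nearW => t; rewrite (pos_adv_sq_ge0 (pit_policy t)) /=.
  by rewrite ler_pdivlMl ?eg_gain_gt0 ?V_pit_increment.
have incr_cvg : V (pit t.+1) s - V (pit t) s @[t --> \oo] --> V_lim s - V_lim s.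
  apply: cvgB (V_pit_cvg s).
  by rewrite (cvg_shiftS (fun t => V (pit t) s)); exact: V_pit_cvg.
by rewrite -(mulr0 eg_gain^-1) -(subrr (V_lim s)); exact: cvgMl_tmp.
Qed.

Lemma adv_pit_cvg s a : U (pit t) s a @[t --> \oo] --> U_lim s a.
Proof.
apply: cvgB (V_pit_cvg s); apply: cvgD; first exact: cvg_cst.
by apply: cvgMl_tmp; apply: cvg_sum => y _; apply: cvgMl_tmp; exact: V_pit_cvg.
Qed.

Lemma eg_step_ratio [pi : S -> A -> R] : is_policy pi -> full_support pi ->
  forall s b a, eg_step P r gamma eta pi s b / eg_step P r gamma eta pi s a =
    pi s b / pi s a * expR (eta * (posp (U pi s b) - posp (U pi s a))).
Proof.
move=> piP pi_gt0 s b a.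
have Z_neq0 : Z pi s != 0 by rewrite gt_eqF // (lt_le_trans ltr01 (Zn_ge1 piP s)).
rewrite mulrBr expRB /eg_step; field.
by rewrite Z_neq0 !gt_eqF ?pi_gt0 ?expR_gt0.
Qed.

Lemma pit_ratio_cvg0 [s a b] : U_lim s b <= 0 -> 0 < U_lim s a ->
  pit t s b / pit t s a @[t --> \oo] --> 0.
Proof.
move=> Ub_le0 Ua_gt0; set c := U_lim s a.
apply: (@contracting_cvg0 _ _ (expR (- (eta * c / 2)))).
- by rewrite expR_ge0 expR_lt1 oppr_lt0 divr_gt0 ?mulr_gt0.
- by move=> t; rewrite divr_ge0 ?ltW ?pit_gt0.
have Ub_lt : U_lim s b < c / 4 by rewrite (le_lt_trans Ub_le0) ?divr_gt0.
have Ua_gt : 3 * c / 4 < U_lim s a by rewrite /c; lra.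
near=> t.
have Ubt_lt : U (pit t) s b < c / 4.
  by near: t; exact: (cvgr_lt _ (adv_pit_cvg s b) _ Ub_lt).
have Uat_gt : 3 * c / 4 < U (pit t) s a.
  by near: t; exact: (cvgr_gt _ (adv_pit_cvg s a) _ Ua_gt).
rewrite (eg_step_ratio (pit_policy t) (pit_gt0 t)) mulrC.
apply: ler_wpM2r; first by rewrite divr_ge0 ?ltW ?pit_gt0.
rewrite ler_expR -mulrN -mulrA ler_wpM2l ?(ltW eta_gt0) //.
have := ler_posp (U (pit t) s a); have : posp (U (pit t) s b) <= c / 4.
  by rewrite /posp ge_max (ltW Ubt_lt) divr_ge0 ?(ltW Ua_gt0).
lra.
Unshelve. all: by end_near.
Qed.

Lemma pit_cvg0_of_U_lim_gt0 s b : 0 < U_lim s b -> pit t s b @[t --> \oo] --> 0.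
Proof.
move=> Ub_gt0; set d := U_lim s b / 2.
have d_gt0 : 0 < d by rewrite divr_gt0.
have d_lt : d < U_lim s b by rewrite /d; lra.
apply: (@squeeze_cvg0 _ _ (fun t => pos_adv_sq (pit t) s / d ^+ 2)); last first.
  by rewrite -(mul0r (d ^+ 2)^-1); exact: cvgMr_tmp (pos_adv_sq_pit_cvg0 s).
near=> t.
have Ubt_gt : d < U (pit t) s b by near: t; exact: (cvgr_gt _ (adv_pit_cvg s b) _ d_lt).
rewrite (ltW (pit_gt0 t s b)) /= ler_pdivlMr ?exprn_gt0 //.
apply: le_trans (le_sum_term b _) => [|a]; last first.
  by rewrite mulr_ge0 ?sqr_ge0 ?(ltW (pit_gt0 t s a)).
rewrite ler_wpM2l ?(ltW (pit_gt0 t s b)) // !expr2.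
have d_le : d <= posp (U (pit t) s b) := le_trans (ltW Ubt_gt) (ler_posp _).
by rewrite ler_pM ?(ltW d_gt0).
Unshelve. all: by end_near.
Qed.

Lemma U_lim_le0 s a : U_lim s a <= 0.
Proof.
rewrite leNgt; apply/negP => Ua_gt0.
have pit_cvg0 b : pit t s b @[t --> \oo] --> 0.
  have [Ub_le0|Ub_gt0] := lerP (U_lim s b) 0; last exact: pit_cvg0_of_U_lim_gt0.
  apply: (squeeze_cvg0 _ (pit_ratio_cvg0 Ub_le0 Ua_gt0)); apply: nearW => t.
  rewrite (ltW (pit_gt0 t s b)) /= ler_pdivlMr ?pit_gt0 //.
  by rewrite ler_piMr ?(ltW (pit_gt0 t s b)) ?(pi_le1 (pit_policy t)).
have := cvg_sum (index_enum A) predT (fun b _ => pit_cvg0 b); rewrite big1_eq.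
have -> : (fun t => \sum_b pit t s b) = fun=> 1.
  by apply: funext => t; exact: pi_sum1 (pit_policy t) s.
move=> sum_cvg0; have /eqP : (1 : R) = 0.
  exact: cvg_unique _ (cvg_cst (1 : R)) sum_cvg0.
by rewrite oner_eq0.
Qed.

Lemma pit_cvg0_of_U_lim_lt0 [s a] : U_lim s a < 0 -> pit t s a @[t --> \oo] --> 0.
Proof.
move=> Ua_lt0; pose err t := \sum_b `|U (pit t) s b - U_lim s b|.
have err_cvg0 : err t @[t --> \oo] --> 0.
  have -> : 0 = \sum_b `|U_lim s b - U_lim s b|.
    by rewrite big1 // => b _; rewrite subrr normr0.
  apply: cvg_sum => b _; apply: cvg_norm; exact: cvgB (adv_pit_cvg s b) (cvg_cst _).
apply: (@squeeze_cvg0 _ _ (fun t => err t / - U_lim s a)); last first.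
  by rewrite -(mul0r (- U_lim s a)^-1); exact: cvgMr_tmp.
apply: nearW => t; rewrite (ltW (pit_gt0 t s a)) /= ler_pdivlMr ?oppr_gt0 //.
have term_ge0 b : 0 <= pit t s b * - U_lim s b.
  by rewrite mulr_ge0 ?(ltW (pit_gt0 t s b)) // oppr_ge0 U_lim_le0.
apply: le_trans (le_sum_term a term_ge0) _.
(* [pi_t] averages the advantages [U_t] to zero, so only the errors remain *)
have -> : \sum_b pit t s b * - U_lim s b =
          \sum_b pit t s b * (U (pit t) s b - U_lim s b).
  under [RHS]eq_bigr do rewrite mulrBr.
  rewrite sumrB (avg_adv0 (pit_policy t)) add0r -sumrN.
  by under eq_bigr do rewrite mulrN.
apply: ler_sum => b _; apply: le_trans (ler_norm _) _.
rewrite normrM ger0_norm ?(ltW (pit_gt0 t s b)) // ler_piMl ?normr_ge0 //.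
exact: pi_le1 (pit_policy t) s b.
Qed.

Section Optimality.
Variable pistar : S -> A -> R.
Hypothesis pistar_opt : optimal_policy P r gamma pistar.
Hypothesis pistar_unique :
  forall pi, optimal_policy P r gamma pi -> forall s a, pi s a = pistar s a.

Let pistarP : is_policy pistar := proj1 pistar_opt.

Lemma V_lim_eq : V_lim = V pistar.
Proof.
apply: funext => s; apply/eqP; rewrite eq_le; apply/andP; split.
  apply: limr_le; first exact: (cvgP _ (V_pit_cvg s)).
  by apply: nearW => t; exact: (proj2 pistar_opt) _ (pit_policy t) s.
apply: (V_le_supersolution pistarP) => x; rewrite -avg_qval.
apply: (convex_le (pi_ge0 pistarP x) (pi_sum1 pistarP x)) => b.
by rewrite -subr_le0 U_lim_le0.
Qed.

Lemma U_limE s a : U_lim s a = U pistar s a.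
Proof. by rewrite /U_lim V_lim_eq. Qed.

Lemma pistar_eq0 s a : U_lim s a < 0 -> pistar s a = 0.
Proof.
rewrite U_limE; apply: policy_eq0_of_adv_lt0 pistarP _ => b.
by rewrite -U_limE U_lim_le0.
Qed.

Lemma pistar_eq1 s a : U_lim s a = 0 -> pistar s a = 1.
Proof.
rewrite U_limE => Ua_eq0.
have switch_opt := switch_optimal s a pistar_opt Ua_eq0.
by rewrite -(pistar_unique _ switch_opt s a) /switch !eqxx.
Qed.

Lemma Vrho_pit_cvg rho :
  Vrho P r gamma rho (pit t) @[t --> \oo] --> Vrho P r gamma rho pistar.
Proof.
apply: cvg_sum => s _; apply: cvgMl_tmp; rewrite -V_lim_eq; exact: V_pit_cvg.
Qed.

Lemma pit_cvg s a : pit t s a @[t --> \oo] --> pistar s a.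
Proof.
have [Ua_lt0|Ua_gt0|Ua_eq0] := ltrgtP (U_lim s a) 0.
- by rewrite pistar_eq0 //; exact: pit_cvg0_of_U_lim_lt0.
- by have := U_lim_le0 s a; rewrite leNgt Ua_gt0.
(* pistar is deterministic at s, so every other action has negative limit advantage *)
have Ub_lt0 b : b != a -> U_lim s b < 0.
  move=> ba; rewrite lt_neqAle U_lim_le0 andbT; apply/eqP => Ub_eq0.
  have := pi_sum1 pistarP s; rewrite (bigD1 a) //= (bigD1 b) //= !pistar_eq1 //.
  have : 0 <= \sum_(i | (i != a) && (i != b)) pistar s i.
    by apply: sumr_ge0 => i _; exact: pi_ge0.
  lra.
have pit_aE t : pit t s a = 1 - \sum_(b | b != a) pit t s b.
  by rewrite -(pi_sum1 (pit_policy t) s) (bigD1 a) //= addrK.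
have sum_cvg0 := cvg_sum (index_enum A) (fun b => b != a)
  (fun b ba => pit_cvg0_of_U_lim_lt0 (Ub_lt0 b ba)).
rewrite big1_eq in sum_cvg0.
under eq_fun do rewrite pit_aE.
suff : 1 - \sum_(b | b != a) pit t s b @[t --> \oo] --> (1 - 0 : R).
  by rewrite subr0 pistar_eq1.
by apply: cvgB; [exact: cvg_cst | exact: sum_cvg0].
Qed.

End Optimality.
End ExponentiatedGradient.

End MDPTheory.

Theorem theorem5 (R : realType) (S A : finType)
  (P : S -> A -> S -> R) (r : S -> A -> R) (gamma : R) (rho : S -> R)
  (pistar : S -> A -> R) (dmin : R) :
  is_mdp P r gamma -> is_dist rho ->
  (* unique optimal policy *)
  optimal_policy P r gamma pistar ->
  (forall pi, optimal_policy P r gamma pi -> forall s a, pi s a = pistar s a) ->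
  (* all states reachable *)
  0 < dmin ->
  (forall pi, is_policy pi -> full_support pi ->
     forall s, dmin <= visitation P gamma rho pi s) ->
  exists eta0 : R, 0 < eta0 /\
    forall eta : R, 0 < eta -> eta <= eta0 ->
    forall theta : S -> A -> R,
      (Vrho P r gamma rho (eg_iter P r gamma eta theta t) @[t --> \oo]
         --> Vrho P r gamma rho pistar) /\
      (forall s a, eg_iter P r gamma eta theta t s a @[t --> \oo] --> pistar s a).
Proof.
move=> mdpP rhoP pistar_opt pistar_unique _ _.
have [s0 _] := card_gt0P (sum1_card_gt0 (proj2 rhoP)).
have [a0 _] := card_gt0P (sum1_card_gt0 (proj2 (proj1 pistar_opt) s0)).
exists 1; split=> [|eta eta_gt0 _ theta]; first exact: ltr01.
by split; [exact: Vrho_pit_cvg | exact: pit_cvg].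
Qed.
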